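(* On an interface element $T$ on which the IFE shape functions are unisolvent, for $s=\pm$ (with $s'$ the opposite sign), the $2\times4$ matrix functions $$\Lambda_s(X)=\sum_{i\in\mathcal I}(A_i-X)^T\otimes\Phi^s_{i}(X)+\sum_{i\in\mathcal I^{s'}}\big((A_i-\overline X_i)^T\otimes\Phi^s_{i}(X)\big)(\overline M^s-I_4)$$ do not depend on the choice of the points $\overline X_i\in l$, $i\in\mathcal I^{s'}$.
   Context: Lamé parameters $\lambda^\pm,\mu^\pm>0$; stress $\sigma^s(\mathbf v)=\lambda^s(\nabla\cdot\mathbf v)I+2\mu^s\epsilon(\mathbf v)$. $T$ is a triangle with $\Pi_T=[\mathrm{span}\{1,x,y\}]^2$ and nodes its vertices, or a square with $\Pi_T=[\mathrm{span}\{1,x,y,xy\}]^2$ and nodes its vertices, or a square with $\Pi_T=[\mathrm{span}\{1,x,y,x^2-y^2\}]^2$ and nodes its edge midpoints; $\mathcal I$ the node index set. $\Gamma$ meets $\partial T$ at $D,E$; $l$ is the line through them with unit normal $\bar{\mathbf n}=(\bar n_1,\bar n_2)$; $l$ splits $T$ into $\overline T^\pm$; $\mathcal I^s=\{i:A_i\in T\cap\Omega^s\}$. IFE shape functions $\boldsymbol\phi_{i,T}$ ($1\le i\le2|\mathcal I|$) are the piecewise functions $\boldsymbol\phi^s\in\Pi_T$ on $\overline T^s$, continuous across $l$, with (bilinear/rotated $Q_1$) equal coefficient vectors of $xy$ (resp. $x^2-y^2$), satisfying $\sigma^+(\boldsymbol\phi^+)(F)\bar{\mathbf n}=\sigma^-(\boldsymbol\phi^-)(F)\bar{\mathbf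 n}$ at a fixed $F\in l$, with $\boldsymbol\phi_{i,T}(A_j)=(\delta_{ij},0)^T$ ($i\le|\mathcal I|$), $(0,\delta_{i-|\mathcal I|,j})^T$ ($i>|\mathcal I|$). $\Phi_{i,T}=[\boldsymbol\phi_{i,T},\boldsymbol\phi_{i+|\mathcal I|,T}]$ and $\Phi^s_i$ denotes the $2\times2$ matrix polynomial equal to $\Phi_{i,T}$ on $\overline T^s$. $\overline N^s$ is the $4\times4$ matrix with rows $((\lambda^s+2\mu^s)\bar n_1,\mu^s\bar n_2,\mu^s\bar n_2,\lambda^s\bar n_1)$, $(\lambda^s\bar n_2,\mu^s\bar n_1,\mu^s\bar n_1,(\lambda^s+2\mu^s)\bar n_2)$, $(-\bar n_2,0,\bar n_1,0)$, $(0,-\bar n_2,0,\bar n_1)$; $\overline M^-=(\overline N^+)^{-1}\overline N^-$, $\overline M^+=(\overline N^-)^{-1}\overline N^+$. $\otimes$ is the Kronecker product. *)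

From HB Require Import structures.
From mathcomp Require Import all_boot all_order all_algebra.
Set Implicit Arguments. Unset Strict Implicit. Unset Printing Implicit Defensive.
Import Order.TTheory GRing.Theory Num.Theory.
Local Open Scope ring_scope.

Section IFE.
Variable R : realFieldType.

Definition pt (a b : R) : 'rV[R]_2 := \row_(j < 2) nth 0 [:: a; b] j.
Definition xc (X : 'rV[R]_2) : R := X 0 0.
Definition yc (X : 'rV[R]_2) : R := X 0 1.
Definition dot (X Y : 'rV[R]_2) : R := (X *m Y^T) 0 0.

Inductive elem_kind := Triangle | BilinSquare | RotQ1Square.

(* number of nodes = number of vertices = dim of the scalar space Pi_T *)
Definition nnodes (k : elem_kind) : nat :=
  match k with Triangle => 3 | _ => 4 end.

Definition basis (k : elem_kind) (X : 'rV[R]_2) : 'cV[R]_(nnodes k) :=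
  let x := xc X in let y := yc X in
  match k return 'cV[R]_(nnodes k) with
  | Triangle => \col_(j < 3) nth 0 [:: 1; x; y] j
  | BilinSquare => \col_(j < 4) nth 0 [:: 1; x; y; x * y] j
  | RotQ1Square => \col_(j < 4) nth 0 [:: 1; x; y; x ^+ 2 - y ^+ 2] j
  end.

Definition dbasis (k : elem_kind) (c : 'I_2) (X : 'rV[R]_2) : 'cV[R]_(nnodes k) :=
  let x := xc X in let y := yc X in
  match k return 'cV[R]_(nnodes k) with
  | Triangle => \col_(j < 3)
      nth 0 (if c == 0 then [:: 0; 1; 0] else [:: 0; 0; 1]) j
  | BilinSquare => \col_(j < 4)
      nth 0 (if c == 0 then [:: 0; 1; 0; y] else [:: 0; 0; 1; x]) j
  | RotQ1Square => \col_(j < 4)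
      nth 0 (if c == 0 then [:: 0; 1; 0; 2 * x] else [:: 0; 0; 1; - (2 * y)]) j
  end.

(* A polynomial vector field in [Pi_T]^2 is given by its coefficient matrix
   C : 'M_(2, nnodes k); its value at X is C *m basis k X. *)
Definition peval (k : elem_kind) (C : 'M[R]_(2, nnodes k)) (X : 'rV[R]_2) : 'cV[R]_2 :=
  C *m basis k X.

Definition pgrad (k : elem_kind) (C : 'M[R]_(2, nnodes k)) (X : 'rV[R]_2) : 'M[R]_2 :=
  \matrix_(r < 2, c < 2) (C *m dbasis k c X) r 0.

Definition stress (lam mu : R) (k : elem_kind) (C : 'M[R]_(2, nnodes k)) (X : 'rV[R]_2)
  : 'M[R]_2 :=
  let G := pgrad C X in
  (lam * \tr G) *: 1%:M + (2 * mu) *: ((2%:R)^-1 *: (G + G^T)).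

Definition on_seg (P Q X : 'rV[R]_2) : Prop :=
  exists t : R, 0 <= t <= 1 /\ X = (1 - t) *: P + t *: Q.
Definition on_line (D E X : 'rV[R]_2) : Prop :=
  exists t : R, X = D + t *: (E - D).

(* vertices V of T, listed cyclically; validity of the element:
   a non-degenerate triangle, or an axis-parallel square with vertices
   c, c+(h,0), c+(h,h), c+(0,h), h > 0 *)
Definition valid_elem (k : elem_kind) : ('I_(nnodes k) -> 'rV[R]_2) -> Prop :=
  match k return ('I_(nnodes k) -> 'rV[R]_2) -> Prop with
  | Triangle => fun V =>
      let a := V (inord 1) - V (inord 0) in let b := V (inord 2) - V (inord 0) in
      xc a * yc b - yc a * xc b != 0
  | BilinSquare | RotQ1Square => fun V =>
      exists (c : 'rV[R]_2) (h : R), 0 < h /\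
        V (inord 0) = c /\ V (inord 1) = c + pt h 0 /\
        V (inord 2) = c + pt h h /\ V (inord 3) = c + pt 0 h
  end.

Definition on_bdry (k : elem_kind) (V : 'I_(nnodes k) -> 'rV[R]_2) (X : 'rV[R]_2) : Prop :=
  exists i : 'I_(nnodes k), on_seg (V i) (V (ordS i)) X.

Definition nodes (k : elem_kind) (V : 'I_(nnodes k) -> 'rV[R]_2) (i : 'I_(nnodes k))
  : 'rV[R]_2 :=
  match k with
  | RotQ1Square => (2%:R)^-1 *: (V i + V (ordS i))
  | _ => V i
  end.

(* An IFE candidate function is a pair of pieces (s = true : '+', s = false : '-'),
   each in [Pi_T]^2.  Tbar^+ = {X in T | (X - D).nbar >= 0}, Tbar^- the other side;
   the value of the piecewise function at a node uses the piece of its side of l. *)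
Definition pw_eval (k : elem_kind) (D nb : 'rV[R]_2) (v : bool -> 'M[R]_(2, nnodes k))
  (X : 'rV[R]_2) : 'cV[R]_2 :=
  if 0 <= dot (X - D) nb then peval (v true) X else peval (v false) X.

(* the IFE space: continuity across l (on l cap T = segment [D,E]),
   equal coefficient vectors of xy (resp. x^2-y^2), i.e. of basis index 3
   (vacuous for the triangle, whose basis has only indices 0..2),
   and the traction condition at F *)
Definition ife_space (k : elem_kind) (lam mu : bool -> R) (D E F nb : 'rV[R]_2)
  (v : bool -> 'M[R]_(2, nnodes k)) : Prop :=
  [/\ (forall X, on_seg D E X -> peval (v true) X = peval (v false) X),
      (forall j : 'I_(nnodes k), nat_of_ord j = 3%N -> col j (v true) = col j (v false)) &
      stress (lam true) (mu true) (v true) F *m nb^T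
        = stress (lam false) (mu false) (v false) F *m nb^T ].

(* the shape function phi_{i + c|I|} (c = 0,1):  phi(A_j) = delta_ij e_c *)
Definition is_shape (k : elem_kind) (V : 'I_(nnodes k) -> 'rV[R]_2) (lam mu : bool -> R)
  (D E F nb : 'rV[R]_2) (i : 'I_(nnodes k)) (c : 'I_2) (v : bool -> 'M[R]_(2, nnodes k)) : Prop :=
  ife_space lam mu D E F nb v /\
  forall j : 'I_(nnodes k),
    pw_eval D nb v (nodes V j) = (if j == i then delta_mx c 0 else 0).

Definition unisolvent (k : elem_kind) (V : 'I_(nnodes k) -> 'rV[R]_2) (lam mu : bool -> R)
  (D E F nb : 'rV[R]_2) : Prop :=
  forall v : bool -> 'M[R]_(2, nnodes k), ife_space lam mu D E F nb v ->
    (forall j, pw_eval D nb v (nodes V j) = 0) -> forall s, v s = 0.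

Definition Nbar (lam mu : R) (nb : 'rV[R]_2) : 'M[R]_4 :=
  let n1 := xc nb in let n2 := yc nb in
  \matrix_(i < 4, j < 4) nth 0 (nth [::] [::
     [:: (lam + 2 * mu) * n1; mu * n2; mu * n2; lam * n1];
     [:: lam * n2; mu * n1; mu * n1; (lam + 2 * mu) * n2];
     [:: - n2; 0; n1; 0];
     [:: 0; - n2; 0; n1] ] i) j.

Definition Mbar (lam mu : bool -> R) (nb : 'rV[R]_2) (s : bool) : 'M[R]_4 :=
  invmx (Nbar (lam (~~ s)) (mu (~~ s)) nb) *m Nbar (lam s) (mu s) nb.

Definition kron12 (a : 'rV[R]_2) (B : 'M[R]_2) : 'M[R]_(2, 4) :=
  row_mx (a 0 0 *: B) (a 0 1 *: B).

(* Phi^s_i(X) = [phi^s_{i}(X), phi^s_{i+|I|}(X)] *)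
Definition Phi (k : elem_kind) (phi : 'I_(nnodes k) -> 'I_2 -> bool -> 'M[R]_(2, nnodes k))
  (s : bool) (i : 'I_(nnodes k)) (X : 'rV[R]_2) : 'M[R]_2 :=
  \matrix_(r < 2, c < 2) (peval (phi i c s) X) r 0.

Definition Lambda (k : elem_kind) (V : 'I_(nnodes k) -> 'rV[R]_2) (lam mu : bool -> R)
  (nb : 'rV[R]_2) (Iset : bool -> 'I_(nnodes k) -> bool)
  (phi : 'I_(nnodes k) -> 'I_2 -> bool -> 'M[R]_(2, nnodes k))
  (s : bool) (Xb : 'I_(nnodes k) -> 'rV[R]_2) (X : 'rV[R]_2) : 'M[R]_(2, 4) :=
  \sum_(i < nnodes k) kron12 (nodes V i - X) (Phi phi s i X)
  + \sum_(i < nnodes k | Iset (~~ s) i)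
      kron12 (nodes V i - Xb i) (Phi phi s i X) *m (Mbar lam mu nb s - 1%:M).

End IFE.

From HB Require Import structures.
From mathcomp Require Import all_boot all_order all_algebra ring.
Set Implicit Arguments. Unset Strict Implicit. Unset Printing Implicit Defensive.
Import Order.TTheory GRing.Theory Num.Theory.
Local Open Scope ring_scope.

(* The last two rows of [Nbar] encode the tangential components of the
   gradient jump; they do not depend on the Lamé parameters.  Hence the
   Kronecker product of the tangent vector of l with any 2x2 matrix is the
   same combination of rows of every [Nbar l m nb], and therefore a fixed row
   of the transfer matrix [Mbar].  A displacement between two points of l is a
   multiple of that tangent vector, so it is annihilated by [Mbar - 1], which
   is exactly the dependence of [Lambda] on the auxiliary points. *)

Section Transfer.
Variable R : realFieldType.
Implicit Types (a b : 'rV[R]_2) (B : 'M[R]_2).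

Lemma kron12B a b B : kron12 (a - b) B = kron12 a B - kron12 b B.
Proof. by apply/matrixP => i j; rewrite !mxE; case: splitP => j' _; rewrite !mxE mulrBl. Qed.

Lemma kron12Z t a B : kron12 (t *: a) B = t *: kron12 a B.
Proof. by apply/matrixP => i j; rewrite !mxE; case: splitP => j' _; rewrite !mxE mulrA. Qed.

Implicit Types (l m : R) (nb d : 'rV[R]_2).

Definition tangent nb : 'rV[R]_2 := pt (- yc nb) (xc nb).

Lemma dotE d nb : dot d nb = d 0 0 * xc nb + d 0 1 * yc nb.
Proof.
by rewrite /dot mxE big_ord_recl big_ord1 !mxE (_ : lift ord0 ord0 = 1 :> 'I_2) //; apply/val_inj.
Qed.

Lemma orthogonal_tangent d nb :
  xc nb ^+ 2 + yc nb ^+ 2 = 1 -> dot d nb = 0 ->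
  d = (d 0 1 * xc nb - d 0 0 * yc nb) *: tangent nb.
Proof.
rewrite dotE => nb1 dnb0; apply/rowP => j; rewrite !mxE.
case: j => [[|[|//]] j_lt] /=.
- rewrite (_ : Ordinal j_lt = 0); last exact: val_inj.
  transitivity (d 0 0 * (xc nb ^+ 2 + yc nb ^+ 2) - xc nb * (d 0 0 * xc nb + d 0 1 * yc nb)).
    by rewrite nb1 dnb0 mulr1 mulr0 subr0.
  by ring.
- rewrite (_ : Ordinal j_lt = 1); last exact: val_inj.
  transitivity (d 0 1 * (xc nb ^+ 2 + yc nb ^+ 2) - yc nb * (d 0 0 * xc nb + d 0 1 * yc nb)).
    by rewrite nb1 dnb0 mulr1 mulr0 subr0.
  by ring.
Qed.

Lemma det_Nbar l m nb :
  \det (Nbar l m nb) = m * (l + 2 * m) * (xc nb ^+ 2 + yc nb ^+ 2) ^+ 2.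
Proof.
rewrite (expand_det_row _ 0) !big_ord_recr big_ord0 /= /cofactor.
rewrite !(expand_det_row _ 0) !big_ord_recr !big_ord0 /= /cofactor.
rewrite !(expand_det_row _ 0) !big_ord_recr !big_ord0 /= /cofactor.
by rewrite !det_mx11 !mxE /= !add0n; ring.
Qed.

Lemma Nbar_unitmx l m nb :
  0 < l -> 0 < m -> xc nb ^+ 2 + yc nb ^+ 2 = 1 -> Nbar l m nb \in unitmx.
Proof.
move=> l_gt0 m_gt0 nb1; rewrite unitmxE det_Nbar nb1 expr1n mulr1 unitfE.
by rewrite gt_eqF // !mulr_gt0 // addr_gt0 // mulr_gt0.
Qed.

Lemma dsubmx_Nbar l m nb :
  dsubmx (Nbar l m nb : 'M_(2 + 2, 4)) = row_mx (- yc nb)%:M (xc nb)%:M.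
Proof.
apply/matrixP => i j; rewrite !mxE; case: splitP => j' ->; rewrite !mxE.
all: by case: i j' => [[|[|//]] ?] [[|[|//]] ?]; rewrite /= ?mulr1n ?mulr0n.
Qed.

Lemma kron12_tangent_Nbar l m nb B :
  kron12 (tangent nb) B = row_mx (0 : 'M_2) B *m Nbar l m nb.
Proof.
rewrite -[Nbar l m nb](@vsubmxK _ 2 2 4) mul_row_col mul0mx add0r dsubmx_Nbar.
by rewrite (@mul_mx_row _ 2 2 2 2) !mul_mx_scalar /kron12 !mxE.
Qed.

Lemma kron12_tangent_transfer l m l' m' nb B :
  Nbar l' m' nb \in unitmx ->
  kron12 (tangent nb) B *m (invmx (Nbar l' m' nb) *m Nbar l m nb - 1%:M) = 0.
Proof.
move=> N'_unit; rewrite mulmxBr mulmx1 {1}(kron12_tangent_Nbar l' m') !mulmxA.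
rewrite -(mulmxA _ _ (invmx _)) mulmxV // mulmx1.
by rewrite -kron12_tangent_Nbar subrr.
Qed.

Lemma kron12_on_line_transfer (M : 'M[R]_4) (A D E Y nb : 'rV[R]_2) B :
  (forall B', kron12 (tangent nb) B' *m M = 0) ->
  xc nb ^+ 2 + yc nb ^+ 2 = 1 -> dot (E - D) nb = 0 -> on_line D E Y ->
  kron12 (A - Y) B *m M = kron12 (A - D) B *m M.
Proof.
move=> tangent_M nb1 ED_nb [t ->].
rewrite opprD addrA (kron12B (A - D)) mulmxBl kron12Z.
by rewrite (orthogonal_tangent nb1 ED_nb) kron12Z -!scalemxAl tangent_M !scaler0 subr0.
Qed.

End Transfer.

Theorem mainTheorem13 (R : realFieldType) (k : elem_kind)
  (V : 'I_(nnodes k) -> 'rV[R]_2) (lam mu : bool -> R)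
  (Gamma OmegaP OmegaM : pred 'rV[R]_2) (D E F nb : 'rV[R]_2)
  (phi : 'I_(nnodes k) -> 'I_2 -> bool -> 'M[R]_(2, nnodes k)) :
  valid_elem V ->
  (forall s, 0 < lam s) -> (forall s, 0 < mu s) ->
  (forall X, OmegaP X -> ~~ OmegaM X) ->
  D \in Gamma -> E \in Gamma -> on_bdry V D -> on_bdry V E -> D != E ->
  xc nb ^+ 2 + yc nb ^+ 2 = 1 -> dot (E - D) nb = 0 ->
  on_line D E F ->
  (forall i c, is_shape V lam mu D E F nb i c (phi i c)) ->
  unisolvent V lam mu D E F nb ->
  let Iset := fun (s : bool) (i : 'I_(nnodes k)) =>
                (if s then OmegaP else OmegaM) (nodes V i) in
  forall (s : bool) (Xb1 Xb2 : 'I_(nnodes k) -> 'rV[R]_2),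
    (forall i, Iset (~~ s) i -> on_line D E (Xb1 i)) ->
    (forall i, Iset (~~ s) i -> on_line D E (Xb2 i)) ->
    forall X : 'rV[R]_2,
      Lambda V lam mu nb Iset phi s Xb1 X = Lambda V lam mu nb Iset phi s Xb2 X.
Proof.
move=> _ lam_gt0 mu_gt0 _ _ _ _ _ _ nb1 ED_nb _ _ _ Iset s Xb1 Xb2 Xb1_l Xb2_l X.
have Mbar_tangent B : kron12 (tangent nb) B *m (Mbar lam mu nb s - 1%:M) = 0.
  by rewrite /Mbar kron12_tangent_transfer // Nbar_unitmx.
rewrite /Lambda; congr (_ + _); apply: eq_bigr => i iI.
have transfer := kron12_on_line_transfer (nodes V i) (Phi phi s i X) Mbar_tangent nb1 ED_nb.
by rewrite (transfer _ (Xb1_l i iI)) (transfer _ (Xb2_l i iI)).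
Qed.
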